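(* Let $C\subseteq\mathbb{F}_2^n$ be a code. For every $i\in\{0,\dots,n\}$: (1) $\displaystyle\sum_{j=0}^n\ \sum_{s\in\mathcal S\left(\frac{\delta(C)+(\gamma-1)(i-j)}{2}\right)}\lambda(i,j,s)\,W^{\mathrm{H}}_j(C)\le\binom ni$; (2) $\displaystyle\sum_{j=0}^n\ \sum_{s\in\mathcal S\left(\frac{\hat\delta(C)+(\gamma-1)i}{2}\right)}\lambda(i,j,s)\,W^{\mathrm{H}}_j(C)\le\binom ni$.
   Context: Let $n\ge2$ and fix reals $0<p\le q<1/2$. Let $\gamma:=\log_{q/(1-p)}\left(\frac{p}{1-q}\right)$. For $x\in\mathbb{F}_2^n$, $\omega^{\mathrm{H}}(x)=|\{i:x_i=1\}|$; $d_{ab}(y,x)=|\{i: y_i=a,\ x_i=b\}|$. Discrepancy: $\delta(y,x):=\gamma\,d_{10}(y,x)+d_{01}(y,x)$; symmetric discrepancy: $\hat\delta(y,x):=\delta(y,x)-\omega^{\mathrm{H}}(y)(\gamma-1)$. A code is $C\subseteq\mathbb{F}_2^n$ with $|C|\ge2$; $\delta(C)$, $\hat\delta(C)$ are the minima of $\delta$, $\hat\delta$ over ordered pairs of distinct codewords. $W^{\mathrm{H}}_j(C)$ is the number of codewords of Hamming weight $j$. $\mathcal S:=\{a+\gamma b:a,b\in\mathbb N\}$, $\mathcal S(h):=\{s\in\mathcal S:0\le s<h\}$. For real $a,b$, $\mathrm{Bin}(a,b)=\binom ab$ if $a,b\in\mathbb N$ and $0$ otherwise, and $\lambda(i,j,s):=\mathrm{Bin}\!\left(j,\frac{i\gamma-s+j}{\gamma+1}\right)\mathrm{Bin}\!\left(n-j,\frac{s-j+i}{\gamma+1}\right)$.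 *)

From HB Require Import structures.
From mathcomp Require Import all_boot all_order all_algebra.
From mathcomp Require Import all_classical all_reals all_analysis.
Set Implicit Arguments. Unset Strict Implicit. Unset Printing Implicit Defensive.
Import Order.TTheory GRing.Theory Num.Theory.
Local Open Scope classical_set_scope.
Local Open Scope ring_scope.

Definition gamma (R : realType) (p q : R) : R :=
  ln (p / (1 - q)) / ln (q / (1 - p)).

Definition wH n (x : 'rV['F_2]_n) : nat := #|[set i : 'I_n | x ord0 i == 1]|.

Definition dab n (a b : 'F_2) (y x : 'rV['F_2]_n) : nat :=
  #|[set i : 'I_n | (y ord0 i == a) && (x ord0 i == b)]|.

Definition disc (R : realType) (g : R) n (y x : 'rV['F_2]_n) : R :=
  g * (dab 1 0 y x)%:R + (dab 0 1 y x)%:R.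

Definition sdisc (R : realType) (g : R) n (y x : 'rV['F_2]_n) : R :=
  disc g y x - (wH y)%:R * (g - 1).

Definition code_min (R : realType) n (f : 'rV['F_2]_n -> 'rV['F_2]_n -> R)
    (C : {set 'rV['F_2]_n}) : R :=
  inf [set r : R | exists y x, [/\ y \in C, x \in C, x != y & r = f y x]].

Definition WH n (C : {set 'rV['F_2]_n}) (j : nat) : nat :=
  #|[set x in C | wH x == j]|.

Definition Sset (R : realType) (g h : R) : set R :=
  [set s | (exists a b : nat, s = a%:R + g * b%:R) /\ 0 <= s /\ s < h].

Definition Bin (R : realType) (a b : R) : R :=
  if (a \is a Num.nat) && (b \is a Num.nat)
  then ('C(Num.truncn a, Num.truncn b))%:R else 0.

Definition lambda (R : realType) (g : R) (n i j : nat) (s : R) : R :=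
  Bin j%:R ((i%:R * g - s + j%:R) / (g + 1)) *
  Bin (n%:R - j%:R) ((s - j%:R + i%:R) / (g + 1)).

From HB Require Import structures.
From mathcomp Require Import all_boot all_order all_algebra.
From mathcomp Require Import all_classical all_reals all_analysis.
From mathcomp Require Import ring lra.
Import Order.TTheory GRing.Theory Num.Theory.
Local Open Scope classical_set_scope.
Local Open Scope ring_scope.
Set Implicit Arguments. Unset Strict Implicit.

(* Around each codeword x of
   weight j put the "ball" of words y of weight i with disc(y, x) < h(j).
   If two balls never meet, their sizes add up to at most the number of
   words of weight i, which is at most 'C(n, i).  Each ball is a disjoint
   union of "spheres" disc(y, x) = s, and lambda(i, j, s) is a lower bound
   for the size of such a sphere: when both binomial arguments are natural
   numbers A and B, choosing B ones of x to keep and A zeros of x to flip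
   produces distinct words of the sphere.  Summing over the codewords,
   grouped by weight, gives the left-hand sides of (1) and (2).
   Disjointness of the balls comes from the triangle inequality for disc
   (valid since gamma >= 0) together with its behaviour under swapping the
   arguments; the two radii of (1) and (2) are exactly those for which it
   works with the minima delta(C) and symmetric delta(C). *)

(* gamma is a quotient of two negative logarithms, hence nonnegative. *)
Lemma gamma_ge0 (R : realType) (p q : R) :
  0 < p -> p <= q -> q < 1 / 2 -> 0 <= gamma p q.
Proof.
move=> hp hpq hq; rewrite /gamma.
have ln_neg (a b : R) : 0 < a -> a < 1 - b -> ln (a / (1 - b)) < 0.
  move=> a0 ab; apply: ln_lt0; apply/andP; split.
    by apply: divr_gt0; lra.
  by rewrite ltr_pdivrMr; lra.
have lnp : ln (p / (1 - q)) < 0 by apply: ln_neg; lra.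
have lnq : ln (q / (1 - p)) < 0 by apply: ln_neg; lra.
by rewrite -mulrNN -invrN; apply: divr_ge0; lra.
Qed.

Lemma card_classical_set (T : finType) (P : pred T) :
  #|[set x | P x]%classic| = #|[set x | P x]%SET|.
Proof. by apply: eq_card => k; rewrite inE; apply/idP/idP; rewrite in_setE. Qed.

Section Supports.
Local Open Scope set_scope.
Variable n : nat.
Implicit Types x y : 'rV['F_2]_n.

Definition supp y : {set 'I_n} := [set k | y ord0 k == 1].

Definition row_of_set (Y : {set 'I_n}) : 'rV['F_2]_n :=
  \row_k (if k \in Y then 1 else 0).

Lemma F2_neq1 (a : 'F_2) : (a != 1) = (a == 0).
Proof. by case: a => [[|[|m]] //]. Qed.

Lemma supp_row_of_set Y : supp (row_of_set Y) = Y.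
Proof. by apply/setP => k; rewrite inE mxE; case: (k \in Y). Qed.

Lemma supp_inj : injective supp.
Proof.
move=> y1 y2 /setP e; apply/rowP => k; have := e k; rewrite !inE ord1.
by case: (y1 0 k) => [[|[|?]] ?]; case: (y2 0 k) => [[|[|?]] ?] //= _; apply/val_inj.
Qed.

Lemma wHE y : wH y = #|supp y|.
Proof. exact: card_classical_set. Qed.

Lemma dab10E y x : dab 1 0 y x = #|supp y :\: supp x|.
Proof.
by rewrite /dab card_classical_set; apply: eq_card => k; rewrite !inE -F2_neq1 andbC.
Qed.

Lemma dab01E y x : dab 0 1 y x = #|supp x :\: supp y|.
Proof.
by rewrite /dab card_classical_set; apply: eq_card => k; rewrite !inE -F2_neq1.
Qed.
End Supports.

Lemma cardsD_tri (T : finType) (A B C : {set T}) :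
  (#|A :\: C| <= #|A :\: B| + #|B :\: C|)%N.
Proof.
apply: leq_trans (leq_card_setU _ _).1; apply: subset_leq_card.
apply/fintype.subsetP => k; rewrite !inE.
by case: (k \in A); case: (k \in B); case: (k \in C).
Qed.

Section Discrepancy.
Local Open Scope set_scope.
Variables (R : realType) (n : nat) (g : R).
Implicit Types x y : 'rV['F_2]_n.

Lemma discE y x :
  disc g y x = g * #|supp y :\: supp x|%:R + #|supp x :\: supp y|%:R.
Proof. by rewrite /disc dab10E dab01E. Qed.

Lemma disc_swap x y :
  disc g x y = disc g y x - (g - 1) * ((wH y)%:R - (wH x)%:R).
Proof.
rewrite !discE !wHE -(cardsID (supp x) (supp y)) -(cardsID (supp y) (supp x)).
by rewrite finset.setIC !natrD; ring.
Qed.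

Lemma disc_tri x2 x1 y : 0 <= g -> disc g x2 x1 <= disc g x2 y + disc g y x1.
Proof.
move=> g0; rewrite !discE.
have := cardsD_tri (supp x2) (supp y) (supp x1).
have := cardsD_tri (supp x1) (supp y) (supp x2).
rewrite -!(ler_nat R) !natrD => h01 h10.
have := ler_wpM2l g0 h10; lra.
Qed.

(* Going from x2 to x1 through y: the triangle inequality with the first
   leg reversed, as needed to compare two codewords seen from a word y. *)
Lemma disc_detour x2 x1 y : 0 <= g ->
  disc g x2 x1 <= disc g y x2 + disc g y x1 - (g - 1) * ((wH y)%:R - (wH x2)%:R).
Proof.
by move=> g0; have := disc_tri x2 x1 y g0; rewrite (disc_swap x2 y); lra.
Qed.
End Discrepancy.

Lemma code_min_le (R : realType) n (f : 'rV['F_2]_n -> 'rV['F_2]_n -> R)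
    (C : {set 'rV['F_2]_n}) y x :
  y \in C -> x \in C -> x != y -> code_min f C <= f y x.
Proof.
move=> yC xC xy; apply: ge_inf; last by exists y, x.
exists (- \sum_(p : 'rV['F_2]_n * 'rV['F_2]_n) `|f p.1 p.2|).
move=> _ [y' [x' [_ _ _ ->]]]; rewrite lerNl; apply: (le_trans (y := `|f y' x'|)).
- by rewrite -normrN ler_norm.
- by rewrite (bigD1 (y', x')) //= lerDl sumr_ge0.
Qed.

(* Splitting U :|: V along X recovers U and V when U lies inside X and V
   outside; this makes the map (U, V) |-> U :|: V injective. *)
Lemma setU_splitX (T : finType) (X U V : {set T}) :
  U \subset X -> V \subset ~: X ->
  (U :|: V) :&: X = U /\ (U :|: V) :\: X = V.
Proof.
move=> /fintype.subsetP sU /fintype.subsetP sV; split; apply/setP => k;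
  move: (sU k) (sV k); rewrite !inE;
  case: (k \in U); case: (k \in V); case: (k \in X) => //= hV hU;
  by [move: (hU isT) | move: (hV isT)].
Qed.

Section Spheres.
Local Open Scope set_scope.
Variable n : nat.

(* Lower bound on the number of words y with |supp y \ supp x| = A and
   |supp y ∩ supp x| = B: choose B positions inside supp x and A outside. *)
Lemma card_split_supp_ge (x : 'rV['F_2]_n) (A B : nat) :
  ('C(wH x, B) * 'C(n - wH x, A) <=
   #|[set y : 'rV['F_2]_n | (#|supp y :\: supp x| == A) &&
                           (#|supp y :&: supp x| == B)]|)%N.
Proof.
set X := supp x.
pose D := finset.setX [set U : {set _} | U \subset X & #|U| == B]
               [set V : {set _} | V \subset ~: X & #|V| == A].
have cardD : #|D| = ('C(wH x, B) * 'C(n - wH x, A))%N.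
  have cXC : #|~: X| = (n - #|X|)%N.
    by rewrite -(addKn #|X| #|~: X|) cardsC card_ord.
  by rewrite cardsX !cards_draws cXC wHE.
pose F (uv : {set 'I_n} * {set 'I_n}) := row_of_set (uv.1 :|: uv.2).
have splitF uv : uv \in D -> supp (F uv) :&: X = uv.1 /\ supp (F uv) :\: X = uv.2.
  case: uv => U V; rewrite !inE /= => /andP[/andP[sU _] /andP[sV _]].
  by rewrite supp_row_of_set; apply: setU_splitX.
have injF : {in D &, injective F}.
  move=> [U1 V1] [U2 V2] /splitF[/= eU1 eV1] /splitF[/= eU2 eV2] eF.
  by congr pair; [rewrite -eU1 -eU2 | rewrite -eV1 -eV2]; rewrite eF.
rewrite -cardD -(card_in_imset injF); apply: subset_leq_card.
apply/fintype.subsetP => _ /imsetP[[U V] DUV ->]; rewrite inE.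
have [-> ->] := splitF _ DUV.
by move: DUV; rewrite !inE /= => /andP[/andP[_ ->] /andP[_ ->]].
Qed.
End Spheres.

Lemma wH_le n (x : 'rV['F_2]_n) : (wH x <= n)%N.
Proof. by rewrite wHE -[X in (_ <= X)%N]card_ord max_card. Qed.

(* When both binomial arguments in lambda(i, j, s) are natural numbers
   A and B, they are the numbers of new and kept ones of a word of weight
   i = A + B at discrepancy s = gamma A + (j - B) from a word of weight j. *)
Lemma lambda_params (R : realType) (g s : R) (i j A B : nat) : g + 1 != 0 ->
  (i%:R * g - s + j%:R) / (g + 1) = B%:R ->
  (s - j%:R + i%:R) / (g + 1) = A%:R ->
  i = (A + B)%N /\ s = g * A%:R + j%:R - B%:R.
Proof.
move=> g1 hB hA.
have eB : i%:R * g - s + j%:R = B%:R * (g + 1) by rewrite -hB divfK.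
have eA : s - j%:R + i%:R = A%:R * (g + 1) by rewrite -hA divfK.
have eAB : (i%:R - A%:R - B%:R) * (g + 1) = 0 :> R.
  by rewrite !mulrBl -eA -eB; ring.
have {}eAB : i%:R = A%:R + B%:R :> R.
  by move/eqP: eAB; rewrite mulf_eq0 (negPf g1) orbF => /eqP; lra.
split; first by apply/eqP; rewrite -(eqr_nat R) natrD eAB.
by move: eA; rewrite eAB; lra.
Qed.

Section Lambda.
Variables (R : realType) (g : R) (n i : nat).

Definition disc_sphere (x : 'rV['F_2]_n) (s : R) : {set 'rV['F_2]_n} :=
  [set y | (wH y == i) && (disc g y x == s)].

Lemma lambda_le_sphere x s :
  0 <= g -> lambda g n i (wH x) s <= #|disc_sphere x s|%:R.
Proof.
move=> g0; have g1 : g + 1 != 0 by apply/negP => /eqP g1; lra.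
rewrite /lambda /Bin /disc_sphere; set j := wH x.
case: ifP => [/andP[_ /natrP[B hB]] | _]; last by rewrite mul0r.
case: ifP => [/andP[_ /natrP[A hA]] | _]; last by rewrite mulr0.
rewrite hB hA !natrK -natrB ?wH_le // natrK -natrM ler_nat.
have [-> ->] := lambda_params g1 hB hA.
apply: leq_trans (card_split_supp_ge x A B) _; apply: subset_leq_card.
apply/fintype.subsetP => y; rewrite !inE => /andP[/eqP dA /eqP dB].
rewrite wHE -(cardsID (supp x) (supp y)) dA dB addnC eqxx discE dA /=.
rewrite /j wHE -(cardsID (supp y) (supp x)) finset.setIC dB natrD.
by apply/eqP; ring.
Qed.
End Lambda.

Lemma sum_card_disjoint (I : eqType) (T : finType) (r : seq I)
    (B : I -> {set T}) (D : {set T}) :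
  uniq r -> (forall x, x \in r -> B x \subset D) ->
  {in r &, forall x1 x2, x1 != x2 -> forall y, y \in B x1 -> y \notin B x2} ->
  (\sum_(x <- r) #|B x| <= #|D|)%N.
Proof.
elim: r D => [|x r IHr] D; first by rewrite big_nil.
rewrite /= big_cons => /andP[xr ur] sBD dB.
rewrite -(cardsID (B x) D) (finset.setIidPr (sBD x (mem_head x r))) leq_add2l.
apply: IHr => // [y yr|]; last first.
  by move=> y1 y2 y1r y2r; apply: dB; rewrite inE ?y1r ?y2r orbT.
have yx : y != x by apply: contraNneq xr => <-.
apply/fintype.subsetP => k kBy; rewrite !inE (dB y x) //= ?inE ?yr ?eqxx ?orbT //.
by apply: (fintype.subsetP (sBD y _)); rewrite // inE yr orbT.
Qed.

Lemma mem_finite_support (I : choiceType) (T : Type) (idx : T) (D : set I)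
    (F : I -> T) s :
  s \in finite_support idx D F -> D s.
Proof. by case: finite_supportP => // X XD _ _ /XD. Qed.

Section Balls.
Variables (R : realType) (g : R) (n i : nat).

Definition disc_ball (x : 'rV['F_2]_n) (h : R) : {set 'rV['F_2]_n} :=
  [set y | (wH y == i) && (disc g y x < h)].

(* Summing lambda(i, wH x, s) over the admissible discrepancies s < h
   counts at most the ball: the spheres for distinct s are disjoint. *)
Lemma sum_lambda_le_ball x h : 0 <= g ->
  \sum_(s \in Sset g h) lambda g n i (wH x) s <= #|disc_ball x h|%:R.
Proof.
move=> g0; apply: le_trans (_ : \sum_(s <- finite_support 0 (Sset g h)
    (lambda g n i (wH x))) #|disc_sphere g i x s|%:R <= _).
  by apply: ler_sum => s _; apply: lambda_le_sphere.
rewrite -natr_sum ler_nat; apply: sum_card_disjoint => //.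
  move=> s sfs; have [_ [_ ltsh]] := mem_finite_support sfs.
  by apply/fintype.subsetP => y; rewrite !inE => /andP[-> /eqP dys]; rewrite dys.
move=> s1 s2 _ _ s12 y; rewrite !inE => /andP[_ /eqP ->].
by rewrite eq_sym (negPf s12) andbF.
Qed.
End Balls.

(* There are 'C(n, i) binary words of weight i; we only need the upper bound. *)
Lemma card_weight_le n i :
  (#|[set y : 'rV['F_2]_n | wH y == i]%SET| <= 'C(n, i))%N.
Proof.
rewrite -[X in 'C(X, _)]card_ord -card_draws -(card_imset _ (@supp_inj n)).
apply: subset_leq_card; apply/fintype.subsetP => _ /imsetP[y wy ->].
by move: wy; rewrite !inE -wHE.
Qed.

(* The packing bound: if the radii h (wH x) of two distinct codewords never
   exceed, in sum, the discrepancies to a common word y of weight i, then the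
   balls around the codewords are disjoint, and the lambda-weighted weight
   distribution of C is at most 'C(n, i). *)
Lemma packing_bound (R : realType) (g : R) n (C : {set 'rV['F_2]_n}) (i : nat)
    (h : nat -> R) : 0 <= g ->
  (forall x1 x2 y, x1 \in C -> x2 \in C -> x1 != x2 -> wH y = i ->
     h (wH x1) + h (wH x2) <= disc g y x1 + disc g y x2) ->
  \sum_(j < n.+1) \sum_(s \in Sset g (h j)) lambda g n i j s * (WH C j)%:R
    <= 'C(n, i)%:R.
Proof.
move=> g0 packing; pose ball (x : 'rV['F_2]_n) := disc_ball g i x (h (wH x)).
apply: le_trans (_ : (\sum_(x in C) #|ball x|)%:R <= _); last first.
  rewrite ler_nat; apply: leq_trans (card_weight_le n i).
  have -> : (\sum_(x in C) #|ball x| = \sum_(x <- enum C) #|ball x|)%N.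
    by rewrite big_enum.
  apply: sum_card_disjoint => [|x _|x1 x2]; first exact: enum_uniq.
    by apply/fintype.subsetP => y; rewrite !inE => /andP[].
  rewrite !mem_enum => x1C x2C x12 y; rewrite !inE => /andP[/eqP wy lt1].
  have := packing x1 x2 y x1C x2C x12 wy.
  by rewrite negb_and -leNgt; move: lt1; lra.
rewrite natr_sum (partition_big (fun x => inord (wH x) : 'I_n.+1) xpredT) //=.
apply: ler_sum => j _; rewrite -mulr_fsuml /WH mulr_natr -sumr_const.
rewrite [X in _ <= X](eq_bigl (fun x => x \in [set x in C | wH x == j])); last first.
  by move=> x; rewrite !inE -(inj_eq val_inj) /= inordK // ltnS wH_le.
apply: ler_sum => x; rewrite inE => /andP[_ /eqP wx].
by rewrite -wx; apply: sum_lambda_le_ball.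
Qed.

Theorem mainTheorem15 (R : realType) (n : nat) (hn : (2 <= n)%N) (p q : R)
  (hp : 0 < p) (hpq : p <= q) (hq : q < 1 / 2)
  (C : {set 'rV['F_2]_n}) (hC : (2 <= #|C|)%N) (i : nat) (hi : (i <= n)%N) :
  let g := gamma p q in
  (\sum_(j < n.+1)
      \sum_(s \in Sset g ((code_min (@disc R g n) C + (g - 1) * (i%:R - j%:R)) / 2))
        lambda g n i j s * (WH C j)%:R <= ('C(n, i))%:R)
  /\
  (\sum_(j < n.+1)
      \sum_(s \in Sset g ((code_min (@sdisc R g n) C + (g - 1) * i%:R) / 2))
        lambda g n i j s * (WH C j)%:R <= ('C(n, i))%:R).
Proof.
move=> g; have g0 : 0 <= g := gamma_ge0 hp hpq hq.
split.
- pose h j := (code_min (@disc R g n) C + (g - 1) * (i%:R - j%:R)) / 2.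
  apply: (packing_bound (h := h)) => // x1 x2 y x1C x2C x12 wy.
  have x21 : x2 != x1 by rewrite eq_sym.
  have d21 := code_min_le (@disc R g n) x2C x1C x12.
  have d12 := code_min_le (@disc R g n) x1C x2C x21.
  have := disc_detour x2 x1 y g0; have := disc_detour x1 x2 y g0.
  by rewrite /h wy; lra.
- pose h (j : nat) := (code_min (@sdisc R g n) C + (g - 1) * i%:R) / 2.
  apply: (packing_bound (h := h)) => // x1 x2 y x1C x2C x12 wy.
  have := code_min_le (@sdisc R g n) x2C x1C x12; rewrite /sdisc.
  by have := disc_detour x2 x1 y g0; rewrite /h wy; lra.
Qed.
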